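(* Let $(U_1,U_2)$ have joint CDF equal to the power-divergence copula $C_\lambda$, and define the tail-dependence coefficients $T_L(\lambda)=\lim_{u\downarrow0}\Pr(U_1\le u\mid U_2\le u)$ and $T_U(\lambda)=\lim_{u\uparrow1}\Pr(U_1\ge u\mid U_2\ge u)$. Then (i) $T_L(\lambda)=2^{1/(\lambda+1)}$ if $\lambda<-1$ and $T_L(\lambda)=0$ if $\lambda\ge-1$; (ii) $T_U(\lambda)=2-\sqrt{2}$ for every $\lambda\in(-\infty,\infty)$.
   Context: For $\lambda\in\mathbb{R}$ define $\phi_\lambda$ on $[0,\infty)$ by $\phi_\lambda(x)=\frac{1}{\lambda(\lambda+1)}(x^{\lambda+1}-x+\lambda(1-x))$ for $\lambda\neq-1,0$; $\phi_0(x)=1-x+x\log x$; $\phi_{-1}(x)=x-1-\log x$; values at $x=0$ are limits, so $\phi_\lambda(0)=1/(\lambda+1)$ for $\lambda>-1$ and $\phi_\lambda(0)=\infty$ for $\lambda\le-1$. On $[0,1]$, $\phi_\lambda$ is convex, strictly decreasing, $\phi_\lambda(1)=0$. The pseudoinverse is $\phi_\lambda^{[-1]}(t)=\phi_\lambda^{-1}(t)$ (inverse of $\phi_\lambda|_{[0,1]}$) for $0\le t<\phi_\lambda(0)$ and $0$ for $t\ge\phi_\lambda(0)$. The power-divergence (PD) copula is $C_\lambda(u_1,u_2)=\phi_\lambda^{[-1]}(\phi_\lambda(u_1)+\phi_\lambda(u_2))$, $u_1,u_2\in[0,1]$ (with $\phi_\lambda^{[-1]}(\infty)=0$). *)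

From Stdlib Require Import Reals Lra ClassicalEpsilon.
From Coquelicot Require Import Coquelicot.
Open Scope R_scope.

(* Power-divergence generator phi_lambda on [0,oo), with values in Rbar so that
   phi_lambda(0) = +oo for lambda <= -1.  (Values for x < 0 are irrelevant.) *)
Definition phi (lam x : R) : Rbar :=
  if Rlt_dec 0 x then
    Finite (
      if Req_EM_T lam 0 then 1 - x + x * ln x
      else if Req_EM_T lam (-1) then x - 1 - ln x
      else (Rpower x (lam + 1) - x + lam * (1 - x)) / (lam * (lam + 1)))
  else (* x = 0 : limiting value *)
    if Rlt_dec (-1) lam then Finite (1 / (lam + 1)) else p_infty.

(* Inverse of phi_lambda restricted to [0,1] (chosen classically; it is the
   unique x in [0,1] with phi_lambda x = t when t lies in the range). *)
Definition phi_inv (lam t : R) : R :=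
  epsilon (inhabits 0) (fun x => 0 <= x <= 1 /\ phi lam x = Finite t).

Definition phi_pinv (lam : R) (t : Rbar) : R :=
  match t with
  | Finite t' =>
      if Rle_dec 0 t' then
        if Rbar_lt_dec (Finite t') (phi lam 0) then phi_inv lam t' else 0
      else 0
  | _ => 0
  end.

Definition PDcopula (lam u1 u2 : R) : R :=
  phi_pinv lam (Rbar_plus (phi lam u1) (phi lam u2)).

(* For (U1,U2) with joint CDF C (uniform margins, continuous):
     Pr(U1 <= u | U2 <= u) = C(u,u) / u,
     Pr(U1 >= u | U2 >= u) = (1 - 2u + C(u,u)) / (1 - u). *)
Definition lower_cond (lam u : R) : R := PDcopula lam u u / u.
Definition upper_cond (lam u : R) : R := (1 - 2 * u + PDcopula lam u u) / (1 - u).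

(* On the diagonal, c = C(u,u) is the point of (0,1) with phi(c) = 2 phi(u), as long as
   2 phi(u) < phi(0).  Near 1 the generator has a double zero with phi''(1) = 1, so
   phi(y) ~ (1-y)^2/2; hence (1-c)/(1-u) -> sqrt 2 and the upper conditional probability
   2 - (1-c)/(1-u) tends to 2 - sqrt 2 for every lambda.  Near 0: for lambda > -1,
   phi(0) = 1/(lambda+1) is finite and eventually below 2 phi(u), so C(u,u) = 0; for
   lambda = -1, ln c <= 2 + 2 ln u gives c <= e^2 u^2; for lambda < -1 the dominant term
   of phi(u) is u^(lambda+1)/(lambda(lambda+1)), so (c/u)^(lambda+1) -> 2. *)

From Stdlib Require Import Reals Lra ClassicalEpsilon.
From Coquelicot Require Import Coquelicot.
Open Scope R_scope.

Lemma Rpower_1_l a : Rpower 1 a = 1.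
Proof. unfold Rpower. rewrite ln_1, Rmult_0_r, exp_0. reflexivity. Qed.

Lemma Rpower_m1 x : 0 < x -> Rpower x (-1) = / x.
Proof.
  intros Hx. replace (-1) with (- (1)) by ring.
  rewrite Rpower_Ropp, Rpower_1 by exact Hx. reflexivity.
Qed.

Lemma is_derive_Rpower a x : 0 < x ->
  is_derive (fun y => Rpower y a) x (a * Rpower x (a - 1)).
Proof. intros Hx; apply is_derive_Reals, derivable_pt_lim_power, Hx. Qed.

Lemma Derive_Rpower a x : 0 < x -> Derive (fun y => Rpower y a) x = a * Rpower x (a - 1).
Proof. intros Hx; apply is_derive_unique, is_derive_Rpower, Hx. Qed.

Lemma Rpower_continuous a x : 0 < x -> continuity_pt (fun y => Rpower y a) x.
Proof.
  intros Hx; apply continuity_pt_filterlim, (ex_derive_continuous (fun y => Rpower y a)).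
  eexists; apply is_derive_Rpower, Hx.
Qed.

Lemma MVT_pos (g g' : R -> R) a b : 0 < a < b ->
  (forall x, 0 < x -> is_derive g x (g' x)) ->
  exists c, a < c < b /\ g b - g a = g' c * (b - a).
Proof.
  intros Hab Hg. destruct (MVT_cor2 g g' a b) as [c [E Hc]]; [lra | |].
  - intros c Hc. apply is_derive_Reals, Hg. lra.
  - exists c. split; assumption.
Qed.

Lemma ball_Rabs (x e y : R) : ball x e y <-> Rabs (y - x) < e.
Proof. reflexivity. Qed.

Section DoubleZero.

Variables g g' g'' : R -> R.
Hypothesis g_derive : forall x, 0 < x -> is_derive g x (g' x).
Hypothesis g'_derive : forall x, 0 < x -> is_derive g' x (g'' x).
Hypothesis g_1 : g 1 = 0.
Hypothesis g'_1 : g' 1 = 0.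

Lemma double_zero_lower_bound m y : 0 < y <= 1 ->
  (forall s, y <= s <= 1 -> m <= g'' s) -> m * (1 - y) ^ 2 / 2 <= g y.
Proof.
  intros Hy Hm. destruct (Req_dec y 1) as [-> | Hy1]; [rewrite g_1; lra |].
  set (h s := g s - m * (1 - s) ^ 2 / 2).
  assert (h_derive : forall s, 0 < s -> is_derive h s (g' s + m * (1 - s))).
  { intros s Hs. unfold h. auto_derive; [exists (g' s); apply g_derive, Hs |].
    replace (Derive (fun x => g x) s) with (g' s)
      by (symmetry; apply is_derive_unique, g_derive, Hs).
    field. }
  assert (h'_nonpos : forall s, y < s < 1 -> g' s + m * (1 - s) <= 0).
  { intros s Hs. destruct (MVT_pos g' g'' s 1) as [c [Hc E]]; [lra | exact g'_derive |].
    rewrite g'_1 in E. pose proof (Hm c ltac:(lra)). nra. }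
  destruct (MVT_pos h (fun s => g' s + m * (1 - s)) y 1) as [c [Hc E]]; [lra | exact h_derive |].
  unfold h in E. rewrite g_1 in E. pose proof (h'_nonpos c Hc). nra.
Qed.

End DoubleZero.

Lemma double_zero_upper_bound (g g' g'' : R -> R) M y :
  (forall x, 0 < x -> is_derive g x (g' x)) ->
  (forall x, 0 < x -> is_derive g' x (g'' x)) -> g 1 = 0 -> g' 1 = 0 ->
  0 < y <= 1 -> (forall s, y <= s <= 1 -> g'' s <= M) -> g y <= M * (1 - y) ^ 2 / 2.
Proof.
  intros Hg Hg' g1 g'1 Hy HM.
  assert (H := double_zero_lower_bound (fun x => - g x) (fun x => - g' x) (fun x => - g'' x)).
  assert (- M * (1 - y) ^ 2 / 2 <= - g y); [| lra].
  apply H; [intros x Hx; exact (is_derive_opp _ _ _ (Hg x Hx)) |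
             intros x Hx; exact (is_derive_opp _ _ _ (Hg' x Hx)) |
             rewrite g1; ring | rewrite g'1; ring | exact Hy |].
  intros s Hs. specialize (HM s Hs). lra.
Qed.

Lemma double_zero_ratio (g g' g'' : R -> R) :
  (forall x, 0 < x -> is_derive g x (g' x)) ->
  (forall x, 0 < x -> is_derive g' x (g'' x)) -> g 1 = 0 -> g' 1 = 0 ->
  continuity_pt g'' 1 ->
  filterlim (fun y => g y / ((1 - y) ^ 2 / 2)) (at_left 1) (locally (g'' 1)).
Proof.
  intros Hg Hg' g1 g'1 Hcont. apply filterlim_locally. intros eps.
  apply continuity_pt_filterlim in Hcont. rewrite filterlim_locally in Hcont.
  destruct (Hcont (pos_div_2 eps)) as [d Hd].
  exists (mkposreal _ (Rmin_pos d 1 (cond_pos d) Rlt_0_1)).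
  intros y Hy Hy1. rewrite ball_Rabs, Rabs_left in Hy by lra. simpl in Hy.
  pose proof (Rmin_l d 1). pose proof (Rmin_r d 1).
  assert (Hclose : forall s, y <= s <= 1 -> Rabs (g'' s - g'' 1) < eps / 2).
  { intros s Hs. apply ball_Rabs, Hd, ball_Rabs. rewrite Rabs_left1; lra. }
  assert (Lo : (g'' 1 - eps / 2) * (1 - y) ^ 2 / 2 <= g y).
  { apply (double_zero_lower_bound g g' g''); try assumption; [lra |].
    intros s Hs. pose proof (Rabs_def2 _ _ (Hclose s Hs)). lra. }
  assert (Up : g y <= (g'' 1 + eps / 2) * (1 - y) ^ 2 / 2).
  { apply (double_zero_upper_bound g g' g''); try assumption; [lra |].
    intros s Hs. pose proof (Rabs_def2 _ _ (Hclose s Hs)). lra. }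
  assert (Hw : 0 < (1 - y) ^ 2 / 2) by nra.
  assert (g y / ((1 - y) ^ 2 / 2) <= g'' 1 + eps / 2) by (apply Rle_div_l; lra).
  assert (g'' 1 - eps / 2 <= g y / ((1 - y) ^ 2 / 2)) by (apply Rle_div_r; lra).
  pose proof (cond_pos eps). apply ball_Rabs, Rabs_def1; lra.
Qed.

Section RealFilterlim.

Context {T : Type} {F : (T -> Prop) -> Prop} {FF : Filter F}.

Lemma filterlim_Rplus (f g : T -> R) a b :
  filterlim f F (locally a) -> filterlim g F (locally b) ->
  filterlim (fun x => f x + g x) F (locally (a + b)).
Proof. intros Hf Hg. exact (filterlim_comp_2 f g Rplus Hf Hg (filterlim_plus a b)). Qed.

Lemma filterlim_Rmult (f g : T -> R) a b :
  filterlim f F (locally a) -> filterlim g F (locally b) ->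
  filterlim (fun x => f x * g x) F (locally (a * b)).
Proof. intros Hf Hg. exact (filterlim_comp_2 f g Rmult Hf Hg (filterlim_mult a b)). Qed.

Lemma filterlim_continuity_pt (h : R -> R) (f : T -> R) l : continuity_pt h l ->
  filterlim f F (locally l) -> filterlim (fun x => h (f x)) F (locally (h l)).
Proof.
  intros Hh Hf. exact (filterlim_comp _ _ _ f h _ _ _ Hf (proj1 (continuity_pt_filterlim h l) Hh)).
Qed.

End RealFilterlim.

Lemma at_right_0_intro (P : R -> Prop) : (forall u, 0 < u < 1 -> P u) -> at_right 0 P.
Proof.
  intros HP. exists (mkposreal 1 Rlt_0_1). intros u Hball Hu.
  rewrite ball_Rabs, Rminus_0_r, Rabs_right in Hball by lra. apply HP. simpl in Hball. lra.
Qed.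

Lemma at_left_1_intro (P : R -> Prop) : (forall u, 0 < u < 1 -> P u) -> at_left 1 P.
Proof.
  intros HP. exists (mkposreal 1 Rlt_0_1). intros u Hball Hu.
  rewrite ball_Rabs, Rabs_left in Hball by lra. apply HP. simpl in Hball. lra.
Qed.

Lemma filterlim_id_at_right x : filterlim (fun u => u) (at_right x) (locally x).
Proof.
  exact (filterlim_filter_le_1 _ (filter_le_within (F := locally x) _) (filterlim_id _ _)).
Qed.

Lemma filterlim_Rpower_at_right0 e : 0 < e ->
  filterlim (fun u => Rpower u e) (at_right 0) (locally 0).
Proof.
  intros He. apply filterlim_locally. intros eps.
  exists (mkposreal _ (exp_pos (1 / e * ln eps))). intros u Hu Hu0.
  rewrite ball_Rabs in Hu |- *. simpl in Hu.
  rewrite Rminus_0_r, Rabs_right in Hu by lra.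
  rewrite Rminus_0_r, Rabs_right by apply Rle_ge, Rlt_le, exp_pos.
  replace (pos eps) with (Rpower (Rpower eps (1 / e)) e).
  - apply Rlt_Rpower_l; [exact He | split; [exact Hu0 | exact Hu]].
  - rewrite Rpower_mult. replace (1 / e * e) with 1 by (field; lra). apply Rpower_1, cond_pos.
Qed.

Lemma filterlim_xlnx_at_right0 : filterlim (fun u => u * ln u) (at_right 0) (locally 0).
Proof.
  apply (filterlim_ext_loc (fun u => ln u * exp (ln u))).
  - apply at_right_0_intro. intros u Hu. rewrite exp_ln by lra. ring.
  - exact (filterlim_comp _ _ _ ln (fun y => y * exp y) _ _ _ is_lim_ln_0 is_lim_mul_exp_m).
Qed.

Definition phiR (lam x : R) : R :=
  if Req_EM_T lam 0 then 1 - x + x * ln x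
  else if Req_EM_T lam (-1) then x - 1 - ln x
  else (Rpower x (lam + 1) - x + lam * (1 - x)) / (lam * (lam + 1)).

Definition phiR' (lam x : R) : R :=
  if Req_EM_T lam 0 then ln x else (Rpower x lam - 1) / lam.

Definition phiR'' (lam x : R) : R := Rpower x (lam - 1).

Lemma phi_at_pos lam x : 0 < x -> phi lam x = Finite (phiR lam x).
Proof. intros Hx; unfold phi, phiR; destruct (Rlt_dec 0 x); [reflexivity | lra]. Qed.

Lemma phi_at0_finite lam : -1 < lam -> phi lam 0 = Finite (1 / (lam + 1)).
Proof.
  intros Hl; unfold phi.
  destruct (Rlt_dec 0 0); [lra |]. destruct (Rlt_dec (-1) lam); [reflexivity | lra].
Qed.

Lemma phi_at0_infinite lam : lam <= -1 -> phi lam 0 = p_infty.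
Proof.
  intros Hl; unfold phi.
  destruct (Rlt_dec 0 0); [lra |]. destruct (Rlt_dec (-1) lam); [lra | reflexivity].
Qed.

Lemma phi_at0_pos lam : Rbar_lt 0 (phi lam 0).
Proof.
  destruct (Rlt_dec (-1) lam) as [Hl | Hl].
  - rewrite phi_at0_finite by exact Hl. simpl. apply Rdiv_lt_0_compat; lra.
  - rewrite phi_at0_infinite by lra. exact I.
Qed.

Lemma phiR_0 x : phiR 0 x = 1 - x + x * ln x.
Proof. unfold phiR. destruct (Req_EM_T 0 0); [reflexivity | lra]. Qed.

Lemma phiR_m1 x : phiR (-1) x = x - 1 - ln x.
Proof.
  unfold phiR. destruct (Req_EM_T (-1) 0); [lra |].
  destruct (Req_EM_T (-1) (-1)); [reflexivity | lra].
Qed.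

Lemma phiR_generic lam x : lam <> 0 -> lam <> -1 ->
  phiR lam x = (Rpower x (lam + 1) - x + lam * (1 - x)) / (lam * (lam + 1)).
Proof.
  intros H0 H1; unfold phiR.
  destruct (Req_EM_T lam 0); [contradiction |].
  destruct (Req_EM_T lam (-1)); [contradiction | reflexivity].
Qed.

Lemma is_derive_phiR lam x : 0 < x -> is_derive (phiR lam) x (phiR' lam x).
Proof.
  intros Hx; unfold phiR, phiR'.
  destruct (Req_EM_T lam 0) as [H0 | H0].
  - auto_derive; [lra |]. field; lra.
  - destruct (Req_EM_T lam (-1)) as [H1 | H1].
    + subst lam. auto_derive; [lra |]. rewrite Rpower_m1 by exact Hx. field; lra.
    + auto_derive.
      * eexists; apply is_derive_Rpower, Hx.
      * rewrite Derive_Rpower by exact Hx.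
        replace (lam + 1 - 1) with lam by ring.
        field. split; [exact H0 | intros H; apply H1; lra].
Qed.

Lemma is_derive_phiR' lam x : 0 < x -> is_derive (phiR' lam) x (phiR'' lam x).
Proof.
  intros Hx; unfold phiR', phiR''.
  destruct (Req_EM_T lam 0) as [H0 | H0].
  - subst lam. auto_derive; [lra |]. replace (0 - 1) with (-1) by ring.
    rewrite Rpower_m1 by exact Hx. field; lra.
  - auto_derive.
    + eexists; apply is_derive_Rpower, Hx.
    + rewrite Derive_Rpower by exact Hx. field. exact H0.
Qed.

Lemma phiR_1 lam : phiR lam 1 = 0.
Proof.
  unfold phiR. rewrite ln_1, Rpower_1_l.
  destruct (Req_EM_T lam 0); [ring |]. destruct (Req_EM_T lam (-1)); [ring |].
  unfold Rdiv; ring.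
Qed.

Lemma phiR'_1 lam : phiR' lam 1 = 0.
Proof.
  unfold phiR'. rewrite ln_1, Rpower_1_l.
  destruct (Req_EM_T lam 0); [ring | unfold Rdiv; ring].
Qed.

Lemma phiR''_1 lam : phiR'' lam 1 = 1.
Proof. apply Rpower_1_l. Qed.

Lemma phiR''_pos lam x : 0 < phiR'' lam x.
Proof. apply exp_pos. Qed.

Lemma phiR'_neg lam x : 0 < x < 1 -> phiR' lam x < 0.
Proof.
  intros Hx. destruct (MVT_pos (phiR' lam) (phiR'' lam) x 1) as [c [Hc E]];
    [lra | apply is_derive_phiR' |].
  rewrite phiR'_1 in E. pose proof (phiR''_pos lam c). nra.
Qed.

Lemma phiR_decreasing lam x y : 0 < x < y -> y <= 1 -> phiR lam y < phiR lam x.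
Proof.
  intros Hxy Hy. destruct (MVT_pos (phiR lam) (phiR' lam) x y) as [c [Hc E]];
    [lra | apply is_derive_phiR |].
  pose proof (phiR'_neg lam c ltac:(lra)). nra.
Qed.

Lemma phiR_pos lam x : 0 < x < 1 -> 0 < phiR lam x.
Proof. intros Hx. rewrite <- (phiR_1 lam). apply phiR_decreasing; lra. Qed.

Lemma phiR_continuous lam x : 0 < x -> continuity_pt (phiR lam) x.
Proof.
  intros Hx; apply continuity_pt_filterlim, (ex_derive_continuous (phiR lam)).
  eexists; apply is_derive_phiR, Hx.
Qed.

Lemma phiR_nonneg lam x : 0 < x <= 1 -> 0 <= phiR lam x.
Proof.
  intros Hx. destruct (Req_dec x 1) as [-> | Hx1]; [rewrite phiR_1; lra |].
  apply Rlt_le, phiR_pos; lra.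
Qed.

Lemma phiR_inj lam x y : 0 < x <= 1 -> 0 < y <= 1 -> phiR lam x = phiR lam y -> x = y.
Proof.
  intros Hx Hy E. destruct (Rtotal_order x y) as [Hlt | [Heq | Hgt]]; [| exact Heq |].
  - pose proof (phiR_decreasing lam x y ltac:(lra) ltac:(lra)). lra.
  - pose proof (phiR_decreasing lam y x ltac:(lra) ltac:(lra)). lra.
Qed.

Lemma phiR_at_right0 lam : -1 < lam ->
  filterlim (phiR lam) (at_right 0) (locally (1 / (lam + 1))).
Proof.
  intros Hl. destruct (Req_dec lam 0) as [-> | H0].
  - apply (filterlim_ext (fun u => 1 + (u * ln u + -1 * u))).
    { intros u. rewrite phiR_0. ring. }
    replace (locally (1 / (0 + 1))) with (locally (1 + (0 + -1 * 0))) by (f_equal; field).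
    apply filterlim_Rplus; [apply filterlim_const |].
    apply filterlim_Rplus; [exact filterlim_xlnx_at_right0 |].
    apply filterlim_Rmult; [apply filterlim_const | apply filterlim_id_at_right].
  - set (p := lam + 1).
    apply (filterlim_ext (fun u => 1 / p + (Rpower u p + - p * u) * / (lam * p))).
    { intros u. rewrite phiR_generic by lra. unfold p. field. split; lra. }
    replace (locally (1 / p)) with (locally (1 / p + (0 + - p * 0) * / (lam * p)))
      by (f_equal; ring).
    apply filterlim_Rplus; [apply filterlim_const |].
    apply filterlim_Rmult; [| apply filterlim_const].
    apply filterlim_Rplus; [apply filterlim_Rpower_at_right0; unfold p; lra |].
    apply filterlim_Rmult; [apply filterlim_const | apply filterlim_id_at_right].
Qed.

Lemma phi_pinv_phiR lam x : 0 < x <= 1 -> Rbar_lt (phiR lam x) (phi lam 0) ->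
  phi_pinv lam (phiR lam x) = x.
Proof.
  intros Hx Hlt. unfold phi_pinv.
  destruct (Rle_dec 0 (phiR lam x)) as [_ | N]; [| pose proof (phiR_nonneg lam x Hx); lra].
  destruct (Rbar_lt_dec (phiR lam x) (phi lam 0)) as [_ | N]; [| contradiction].
  unfold phi_inv. set (P y := 0 <= y <= 1 /\ phi lam y = Finite (phiR lam x)).
  assert (HPx : P x) by (split; [lra | apply phi_at_pos; lra]).
  destruct (epsilon_spec (inhabits 0) P (ex_intro _ x HPx)) as [Hy Ey].
  set (y := epsilon _ P) in *.
  destruct (Req_dec y 0) as [Y0 | Y0].
  - rewrite Y0 in Ey. rewrite Ey in Hlt. simpl in Hlt. lra.
  - rewrite phi_at_pos in Ey by lra. injection Ey as Ey.
    apply phiR_inj with lam; [lra | exact Hx | exact Ey].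
Qed.

Lemma phi_pinv_beyond lam t : -1 < lam -> 1 / (lam + 1) <= t -> phi_pinv lam t = 0.
Proof.
  intros Hl Ht. unfold phi_pinv. destruct (Rle_dec 0 t); [| reflexivity].
  destruct (Rbar_lt_dec t (phi lam 0)) as [H | H]; [| reflexivity].
  rewrite phi_at0_finite in H by exact Hl. simpl in H. lra.
Qed.

Lemma PDcopula_diag lam u : 0 < u -> PDcopula lam u u = phi_pinv lam (2 * phiR lam u).
Proof.
  intros Hu. unfold PDcopula. rewrite phi_at_pos by exact Hu. simpl.
  replace (phiR lam u + phiR lam u) with (2 * phiR lam u) by ring. reflexivity.
Qed.

Lemma phiR_IVT lam a t : 0 < a <= 1 -> 0 <= t <= phiR lam a ->
  exists x, a <= x <= 1 /\ phiR lam x = t.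
Proof.
  intros Ha Ht.
  destruct (Req_dec t (phiR lam a)) as [-> | Hta]; [exists a; split; [lra | reflexivity] |].
  destruct (Req_dec t 0) as [-> | Ht0]; [exists 1; split; [lra | apply phiR_1] |].
  destruct (Ranalysis5.IVT_interv (fun z => t - phiR lam z) a 1) as [x [Hx Ex]].
  - intros z Hz. apply continuity_pt_minus; [apply continuity_pt_const; intros ? ?; reflexivity |].
    apply phiR_continuous; lra.
  - destruct (Req_dec a 1) as [-> | ]; [rewrite phiR_1 in Ht; lra | lra].
  - lra.
  - rewrite phiR_1; lra.
  - exists x. split; [exact Hx | lra].
Qed.

Lemma PDcopula_diag_spec lam a u : 0 < a <= 1 -> 0 < u < 1 ->
  2 * phiR lam u <= phiR lam a -> Rbar_lt (2 * phiR lam u) (phi lam 0) ->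
  a <= PDcopula lam u u < 1 /\ phiR lam (PDcopula lam u u) = 2 * phiR lam u.
Proof.
  intros Ha Hu Hle Hlt. pose proof (phiR_pos lam u Hu).
  destruct (phiR_IVT lam a (2 * phiR lam u)) as [x [Hx Ex]]; [exact Ha | lra |].
  assert (Hx1 : x <> 1) by (intros ->; rewrite phiR_1 in Ex; lra).
  rewrite PDcopula_diag, <- Ex, phi_pinv_phiR;
    [split; [lra | reflexivity] | lra | rewrite Ex; exact Hlt | lra].
Qed.

Lemma phiR_unbounded lam t : lam <= -1 -> 0 <= t -> exists a, 0 < a <= 1 /\ t <= phiR lam a.
Proof.
  intros Hl Ht. destruct (Req_dec lam (-1)) as [-> | Hl1].
  - exists (exp (- (t + 1))). pose proof (exp_pos (- (t + 1))) as Hpos.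
    rewrite phiR_m1, ln_exp. split; [| lra]. split; [exact Hpos |].
    apply Rlt_le, (Rlt_le_trans _ (exp 0)); [apply exp_increasing; lra | rewrite exp_0; lra].
  - set (p := lam + 1). assert (Hp : p < 0) by (unfold p; lra).
    assert (Hlp : 0 < lam * p) by nra.
    set (B := lam * p * t + 1 - lam).
    assert (HB : 1 <= B) by (unfold B; pose proof (Rmult_le_pos _ _ (Rlt_le _ _ Hlp) Ht); lra).
    exists (Rpower B (1 / p)).
    assert (HBp : Rpower (Rpower B (1 / p)) p = B).
    { rewrite Rpower_mult. replace (1 / p * p) with 1 by (field; lra). apply Rpower_1; lra. }
    assert (Hpos : 0 < Rpower B (1 / p)) by apply exp_pos.
    assert (Hle1 : Rpower B (1 / p) <= 1).
    { apply (Rle_trans _ (Rpower B 0)); [| rewrite Rpower_O; lra].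
      apply Rle_Rpower; [exact HB |].
      assert (1 / p * p = 1) by (field; lra). nra. }
    split; [lra |]. rewrite phiR_generic by lra. fold p. rewrite HBp.
    apply Rle_div_r; [exact Hlp |].
    assert (Rpower B (1 / p) * p < 0) by nra. unfold B in *. unfold p in *. lra.
Qed.

Lemma PDcopula_diag_unbounded lam u : lam <= -1 -> 0 < u < 1 ->
  0 < PDcopula lam u u < 1 /\ phiR lam (PDcopula lam u u) = 2 * phiR lam u.
Proof.
  intros Hl Hu. pose proof (phiR_pos lam u Hu).
  destruct (phiR_unbounded lam (2 * phiR lam u)) as [a [Ha Hta]]; [exact Hl | lra |].
  destruct (PDcopula_diag_spec lam a u) as [Hc Ec]; try assumption.
  - rewrite phi_at0_infinite by exact Hl. exact I.
  - split; [lra | exact Ec].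
Qed.

Lemma lower_tail_light lam : -1 < lam ->
  filterlim (lower_cond lam) (at_right 0) (locally 0).
Proof.
  intros Hl. set (p := lam + 1). assert (Hp : 0 < p) by (unfold p; lra).
  assert (Heps : 0 < 1 / p / 2) by (apply Rdiv_lt_0_compat; [apply Rdiv_lt_0_compat |]; lra).
  assert (Hnear := proj1 (filterlim_locally _ _) (phiR_at_right0 lam Hl) (mkposreal _ Heps)).
  apply (filterlim_ext_loc (fun _ => 0)); [| apply filterlim_const].
  revert Hnear. apply (filter_imp (F := locally 0)). intros u Hball Hu.
  specialize (Hball Hu). rewrite ball_Rabs in Hball. simpl in Hball.
  apply Rabs_def2 in Hball.
  unfold lower_cond.
  rewrite PDcopula_diag, phi_pinv_beyond by (try exact Hl; try exact Hu; unfold p in *; lra).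
  unfold Rdiv. ring.
Qed.

Lemma PDcopula_diag_m1_le u : 0 < u < 1 -> PDcopula (-1) u u <= exp 2 * u ^ 2.
Proof.
  intros Hu. destruct (PDcopula_diag_unbounded (-1) u) as [Hc Ec]; [lra | exact Hu |].
  set (c := PDcopula (-1) u u) in *. rewrite !phiR_m1 in Ec.
  rewrite <- (exp_ln c) by lra.
  replace (exp 2 * u ^ 2) with (exp (2 + (ln u + ln u)))
    by (rewrite !exp_plus, exp_ln by lra; ring).
  apply Rlt_le, exp_increasing. lra.
Qed.

Lemma lower_tail_m1 : filterlim (lower_cond (-1)) (at_right 0) (locally 0).
Proof.
  apply (filterlim_le_le (fun _ => 0) (lower_cond (-1)) (fun u => exp 2 * u) 0).
  - apply at_right_0_intro. intros u Hu.
    destruct (PDcopula_diag_unbounded (-1) u) as [Hc _]; [lra | exact Hu |].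
    pose proof (PDcopula_diag_m1_le u Hu).
    unfold lower_cond. split.
    + apply Rlt_le, Rdiv_lt_0_compat; lra.
    + apply Rle_div_l; [lra |]. nra.
  - apply filterlim_const.
  - replace (Rbar_locally 0) with (locally (exp 2 * 0)) by (rewrite Rmult_0_r; reflexivity).
    apply filterlim_Rmult; [apply filterlim_const | apply filterlim_id_at_right].
Qed.

Lemma lower_cond_heavy_pow lam u : lam < -1 -> 0 < u < 1 ->
  0 < lower_cond lam u /\
  Rpower (lower_cond lam u) (lam + 1)
  = 2 + (lam + (lam + 1) * PDcopula lam u u - 2 * (lam + 1) * u) * Rpower u (- (lam + 1)).
Proof.
  intros Hl Hu. set (p := lam + 1).
  destruct (PDcopula_diag_unbounded lam u) as [Hc Ec]; [lra | exact Hu |].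
  set (c := PDcopula lam u u) in *.
  rewrite !phiR_generic in Ec by lra. fold p in Ec.
  assert (Hcp : Rpower c p = 2 * Rpower u p + (lam + p * c - 2 * p * u)).
  { assert (Hlp : lam * p <> 0) by (unfold p; nra).
    assert (E : Rpower c p - c + lam * (1 - c) = 2 * (Rpower u p - u + lam * (1 - u))).
    { apply (Rmult_eq_reg_r (/ (lam * p))); [| apply Rinv_neq_0_compat, Hlp].
      unfold Rdiv in Ec. rewrite Ec. ring. }
    unfold p in *. lra. }
  unfold lower_cond. fold c. split; [apply Rdiv_lt_0_compat; lra |].
  assert (Hinv : Rpower (/ u) p = Rpower u (- p)).
  { unfold Rpower. rewrite ln_Rinv by lra. f_equal. ring. }
  assert (Hcancel : Rpower u p * Rpower u (- p) = 1).
  { rewrite <- Rpower_plus, Rplus_opp_r. apply Rpower_O. lra. }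
  unfold Rdiv. rewrite <- Rpower_mult_distr by (try apply Rinv_0_lt_compat; lra).
  rewrite Hinv, Hcp, Rmult_plus_distr_r, Rmult_assoc, Hcancel. ring.
Qed.

Lemma lower_cond_heavy_pow_near lam u : lam < -1 -> 0 < u < 1 ->
  Rabs (Rpower (lower_cond lam u) (lam + 1) - 2)
  <= (Rabs lam + 3 * Rabs (lam + 1)) * Rpower u (- (lam + 1)).
Proof.
  intros Hl Hu. destruct (lower_cond_heavy_pow lam u Hl Hu) as [_ ->].
  destruct (PDcopula_diag_unbounded lam u) as [Hc _]; [lra | exact Hu |].
  set (c := PDcopula lam u u) in *. set (p := lam + 1).
  replace (2 + (lam + p * c - 2 * p * u) * Rpower u (- p) - 2)
    with ((lam + p * c - 2 * p * u) * Rpower u (- p)) by ring.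
  rewrite Rabs_mult, (Rabs_right (Rpower u (- p))) by apply Rle_ge, Rlt_le, exp_pos.
  apply Rmult_le_compat_r; [apply Rlt_le, exp_pos |].
  eapply Rle_trans; [apply Rabs_triang |].
  eapply Rle_trans; [apply Rplus_le_compat_r, Rabs_triang |].
  rewrite Rabs_Ropp, !Rabs_mult, (Rabs_right c), (Rabs_right u), (Rabs_right 2) by lra.
  pose proof (Rabs_pos p). nra.
Qed.

Lemma lower_tail_heavy lam : lam < -1 ->
  filterlim (lower_cond lam) (at_right 0) (locally (Rpower 2 (1 / (lam + 1)))).
Proof.
  intros Hl. set (p := lam + 1). assert (Hp : p < 0) by (unfold p; lra).
  set (B := Rabs lam + 3 * Rabs p).
  assert (Hpow : filterlim (fun u => Rpower (lower_cond lam u) p) (at_right 0) (locally 2)).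
  { apply (filterlim_le_le (fun u => 2 + - B * Rpower u (- p)) _
                           (fun u => 2 + B * Rpower u (- p)) 2).
    - apply at_right_0_intro. intros u Hu.
      pose proof (proj1 (Rabs_le_between _ _) (lower_cond_heavy_pow_near lam u Hl Hu)) as H.
      fold p B in H. lra.
    - replace (Rbar_locally 2) with (locally (2 + - B * 0))
        by (rewrite Rmult_0_r, Rplus_0_r; reflexivity).
      apply filterlim_Rplus; [apply filterlim_const |].
      apply filterlim_Rmult; [apply filterlim_const | apply filterlim_Rpower_at_right0; lra].
    - replace (Rbar_locally 2) with (locally (2 + B * 0))
        by (rewrite Rmult_0_r, Rplus_0_r; reflexivity).
      apply filterlim_Rplus; [apply filterlim_const |].
      apply filterlim_Rmult; [apply filterlim_const | apply filterlim_Rpower_at_right0; lra]. }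
  apply (filterlim_ext_loc (fun u => Rpower (Rpower (lower_cond lam u) p) (1 / p))).
  - apply at_right_0_intro. intros u Hu.
    destruct (lower_cond_heavy_pow lam u Hl Hu) as [Hpos _].
    rewrite Rpower_mult. replace (p * (1 / p)) with 1 by (field; lra). apply Rpower_1, Hpos.
  - apply (filterlim_continuity_pt (fun z => Rpower z (1 / p)));
      [apply Rpower_continuous; lra | exact Hpow].
Qed.

Lemma phiR_ratio_at1 lam :
  filterlim (fun y => phiR lam y / ((1 - y) ^ 2 / 2)) (at_left 1) (locally 1).
Proof.
  pose proof (double_zero_ratio (phiR lam) (phiR' lam) (phiR'' lam)
    (is_derive_phiR lam) (is_derive_phiR' lam) (phiR_1 lam) (phiR'_1 lam)
    (Rpower_continuous _ _ Rlt_0_1)) as H.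
  rewrite phiR''_1 in H. exact H.
Qed.

Lemma PDcopula_diag_near1 lam a : 0 < a < 1 ->
  at_left 1 (fun u => 0 < u < 1 /\ a <= PDcopula lam u u < 1 /\
                      phiR lam (PDcopula lam u u) = 2 * phiR lam u).
Proof.
  intros Ha.
  assert (Hbound : exists r, 0 < r /\ forall t, t < r -> Rbar_lt t (phi lam 0)).
  { pose proof (phi_at0_pos lam) as H. destruct (phi lam 0) as [r | |]; simpl in H.
    - exists r. split; [exact H | intros t Ht; exact Ht].
    - exists 1. split; [lra | intros; exact I].
    - contradiction. }
  destruct Hbound as [r [Hr Hlt]].
  pose proof (phiR_pos lam a Ha) as Hpa.
  assert (Hcont := phiR_continuous lam 1 Rlt_0_1).
  apply continuity_pt_filterlim in Hcont. rewrite filterlim_locally, phiR_1 in Hcont.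
  destruct (Hcont (mkposreal _ (Rdiv_lt_0_compat _ _ (Rmin_pos _ _ Hpa Hr) Rlt_0_2))) as [d Hd].
  exists (mkposreal _ (Rmin_pos _ _ (cond_pos d) Rlt_0_1)). intros u Hball Hu1.
  rewrite ball_Rabs, Rabs_left in Hball by lra. simpl in Hball.
  pose proof (Rmin_l d 1). pose proof (Rmin_r d 1).
  assert (Hsmall : phiR lam u < Rmin (phiR lam a) r / 2).
  { assert (Hdu : ball 0 (Rmin (phiR lam a) r / 2) (phiR lam u)).
    { apply Hd, ball_Rabs. rewrite Rabs_left; lra. }
    rewrite ball_Rabs, Rminus_0_r in Hdu. apply Rabs_lt_between in Hdu. lra. }
  pose proof (Rmin_l (phiR lam a) r). pose proof (Rmin_r (phiR lam a) r).
  assert (Hu : 0 < u < 1) by lra.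
  pose proof (phiR_pos lam u Hu).
  destruct (PDcopula_diag_spec lam a u) as [Hc Ec]; [lra | exact Hu | lra | apply Hlt; lra |].
  split; [exact Hu | split; assumption].
Qed.

Lemma PDcopula_diag_to1 lam : filterlim (fun u => PDcopula lam u u) (at_left 1) (at_left 1).
Proof.
  intros P [d Hd]. set (a := Rmax (1 / 2) (1 - d / 2)).
  assert (Ha : 0 < a < 1).
  { unfold a. pose proof (Rmax_l (1 / 2) (1 - d / 2)). pose proof (cond_pos d).
    split; [lra | apply Rmax_lub_lt; lra]. }
  change (at_left 1 (fun u => P (PDcopula lam u u))).
  generalize (PDcopula_diag_near1 lam a Ha). apply filter_imp. intros u [_ [Hc _]].
  pose proof (Rmax_r (1 / 2) (1 - d / 2)).
  apply Hd; [apply ball_Rabs; rewrite Rabs_left; unfold a in Hc; lra | lra].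
Qed.

Lemma PDcopula_diag_slope_at1 lam :
  filterlim (fun u => (1 - PDcopula lam u u) / (1 - u)) (at_left 1) (locally (sqrt 2)).
Proof.
  set (Q y := phiR lam y / ((1 - y) ^ 2 / 2)).
  assert (Hsq : filterlim (fun u => 2 * Q u * / Q (PDcopula lam u u)) (at_left 1) (locally 2)).
  { replace (locally 2) with (locally (2 * 1 * / 1)) by (f_equal; field).
    apply filterlim_Rmult; [apply filterlim_Rmult; [apply filterlim_const |] |].
    { apply phiR_ratio_at1. }
    apply (filterlim_continuity_pt (fun x => / x));
      [exact (continuity_pt_inv _ _ (continuity_pt_id 1) R1_neq_R0) |].
    exact (filterlim_comp _ _ _ _ Q _ _ _ (PDcopula_diag_to1 lam) (phiR_ratio_at1 lam)). }
  apply (filterlim_ext_loc (fun u => sqrt (2 * Q u * / Q (PDcopula lam u u)))).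
  - generalize (PDcopula_diag_near1 lam (1 / 2) ltac:(lra)). apply filter_imp.
    intros u [Hu [Hc Ec]]. pose proof (phiR_pos lam u Hu).
    replace (2 * Q u * / Q (PDcopula lam u u)) with (Rsqr ((1 - PDcopula lam u u) / (1 - u))).
    + apply sqrt_Rsqr, Rmult_le_pos; [lra | apply Rlt_le, Rinv_0_lt_compat; lra].
    + unfold Q. rewrite Ec. unfold Rsqr. field. repeat split; lra.
  - apply (filterlim_continuity_pt sqrt); [apply continuity_pt_sqrt; lra | exact Hsq].
Qed.

Lemma upper_tail lam : filterlim (upper_cond lam) (at_left 1) (locally (2 - sqrt 2)).
Proof.
  apply (filterlim_ext_loc (fun u => 2 - (1 - PDcopula lam u u) / (1 - u))).
  - apply at_left_1_intro. intros u Hu. unfold upper_cond. field. lra.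
  - apply (filterlim_continuity_pt (fun x => 2 - x)); [| apply PDcopula_diag_slope_at1].
    exact (continuity_pt_minus _ _ _ (continuity_pt_const (fun _ => 2) _ (fun _ _ => eq_refl))
                               (continuity_pt_id _)).
Qed.

Theorem theorem4 :
  forall lam : R,
    (lam < -1 ->
       filterlim (lower_cond lam) (at_right 0) (locally (Rpower 2 (1 / (lam + 1))))) /\
    (-1 <= lam ->
       filterlim (lower_cond lam) (at_right 0) (locally 0)) /\
    filterlim (upper_cond lam) (at_left 1) (locally (2 - sqrt 2)).
Proof.
  intros lam. split; [| split].
  - apply lower_tail_heavy.
  - intros Hl. destruct (Req_dec lam (-1)) as [-> | Hl1].
    + exact lower_tail_m1.
    + apply lower_tail_light. lra.
  - apply upper_tail.
Qed.
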